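(* Let $\widetilde{E(2)}$ be as in the context, let $K\in(-1,1)$, $K\neq0$, let $b$ solve $b'(v)=\sqrt{\lambda_1^2-K(\lambda_1^2\cos^2 b(v)+\lambda_2^2\sin^2 b(v))}$, $b(0)=0$, let $W>0$ be the unique positive number with $b(W)=\pi$, let $x_3$ solve $x_3'(v)=\frac{\lambda_1\lambda_2K}{\lambda_1+b'(v)}$, $x_3(0)=0$, and let $X:\mathbb{C}\to\widetilde{E(2)}$ be $$X(u+iv)=\Big(\tfrac{1}{\lambda_1^2\lambda_2}\big(\tfrac{1}{\lambda_1}\cos x_3(v)\sin b(v)+\tfrac{1}{\lambda_2}\sin x_3(v)\cos b(v)\big)x_3'(v)\sinh(-\lambda_1u),\ \tfrac{1}{\lambda_1^2\lambda_2}\big(\tfrac{1}{\lambda_1}\sin x_3(v)\sin b(v)-\tfrac{1}{\lambda_2}\cos x_3(v)\cos b(v)\big)x_3'(v)\sinh(-\lambda_1u),\ x_3(v)\Big).$$ Then: (1) the $x_3$-axis $\{(0,0,t):t\in\mathbb{R}\}$ is contained in $X(\mathbb{C})$; (2) for every constant $C\in\mathbb{R}$, the intersection of $X(\mathbb{C})$ with the plane $\{x_3=C\}$ is a straight line (in the coordinates $(x_1,x_2,x_3)$); (3) $X(\mathbb{C})$ is invariant under left multiplication by $(0,0,2x_3(W))$; more precisely $(0,0,2x_3(W))*X(u+iv)=X(u+i(v+2W))$ for all $u,v\in\mathbb{R}$.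
   Context: $\widetilde{E(2)}$ is $\mathbb{R}^3$ with coordinates $(x_1,x_2,x_3)$ and group law $(a_1,b_1,c_1)*(a_2,b_2,c_2)=(a_1+a_2\cos c_1-b_2\sin c_1,\ b_1+a_2\sin c_1+b_2\cos c_1,\ c_1+c_2)$, with the left-invariant metric $\lambda_1^2(\cos x_3\,dx_1+\sin x_3\,dx_2)^2+\lambda_2^2(-\sin x_3\,dx_1+\cos x_3\,dx_2)^2+\frac{1}{\lambda_1^2\lambda_2^2}dx_3^2$, where either $\lambda_1>\lambda_2>0$ or $\lambda_1=\lambda_2=1$. (The solution $b$ is defined on all of $\mathbb{R}$ and is an increasing bijection of $\mathbb{R}$, so $W$ exists and is unique.) *)

From Stdlib Require Import Reals.
Open Scope R_scope.

(* Points of the universal cover of E(2), i.e. R^3 with coordinates (x1,x2,x3). *)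
Definition pt := (R * R * R)%type.

Definition e2mul (p q : pt) : pt :=
  let '(a1, b1, c1) := p in
  let '(a2, b2, c2) := q in
  (a1 + a2 * cos c1 - b2 * sin c1, b1 + a2 * sin c1 + b2 * cos c1, c1 + c2).

Definition admissible_lambdas (l1 l2 : R) : Prop :=
  (l1 > l2 /\ l2 > 0) \/ (l1 = 1 /\ l2 = 1).

Definition bprime_rhs (l1 l2 K bv : R) : R :=
  sqrt (l1 ^ 2 - K * (l1 ^ 2 * (cos bv) ^ 2 + l2 ^ 2 * (sin bv) ^ 2)).

Definition x3prime (l1 l2 K : R) (b : R -> R) (v : R) : R :=
  l1 * l2 * K / (l1 + bprime_rhs l1 l2 K (b v)).

Definition Xmap (l1 l2 K : R) (b x3 : R -> R) (u v : R) : pt :=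
  let c := / (l1 ^ 2 * l2) * x3prime l1 l2 K b v * sinh (- l1 * u) in
  (c * (/ l1 * cos (x3 v) * sin (b v) + / l2 * sin (x3 v) * cos (b v)),
   c * (/ l1 * sin (x3 v) * sin (b v) - / l2 * cos (x3 v) * cos (b v)),
   x3 v).

Definition Ximage (l1 l2 K : R) (b x3 : R -> R) (p : pt) : Prop :=
  exists u v, Xmap l1 l2 K b x3 u v = p.

From Stdlib Require Import Reals Lra Psatz.
Open Scope R_scope.

(** The right-hand side of the equation for [b] is Lipschitz (its radicand is
    bounded below by [l1^2 (1 - |K|) > 0]) and [PI]-periodic, so by uniqueness
    of solutions [b (v + W) = b v + PI]; hence [x3'] is [W]-periodic and
    [x3 (v + W) = x3 v + x3 W].  Since [K x3' >= l2 K^2 / 3 > 0], [x3] is a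
    bijection of [R].  The map [X] is ruled:
    [X (u + i v) = (sinh (- l1 u) d(v), x3 v)] with a direction [d(v) <> 0],
    which gives (1) at [u = 0] and (2) since [sinh] is onto; and shifting [v]
    by [2W] turns [b] by [2 PI] and [x3] by [2 x3 W], which is exactly the
    rotation performed by left multiplication with [(0, 0, 2 x3 W)]. *)

Lemma sin_lipschitz a c : Rabs (sin a - sin c) <= Rabs (a - c).
Proof.
  destruct (MVT_abs sin cos c a (fun z _ => derivable_pt_lim_sin z)) as [z [-> _]].
  rewrite <- (Rmult_1_l (Rabs (a - c))) at 2.
  apply Rmult_le_compat_r; [apply Rabs_pos | apply Rabs_le, COS_bound].
Qed.

Lemma sqrt_lipschitz m a c : 0 < m -> m <= a -> m <= c ->
  2 * sqrt m * Rabs (sqrt a - sqrt c) <= Rabs (a - c).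
Proof.
  intros Hm Ha Hc.
  pose proof (sqrt_le_1_alt _ _ Ha). pose proof (sqrt_le_1_alt _ _ Hc).
  pose proof (sqrt_lt_R0 _ Hm).
  pose proof (sqrt_sqrt a ltac:(lra)). pose proof (sqrt_sqrt c ltac:(lra)).
  replace (a - c) with ((sqrt a - sqrt c) * (sqrt a + sqrt c)) by nra.
  rewrite Rabs_mult, (Rabs_pos_eq (sqrt a + sqrt c)) by lra.
  pose proof (Rabs_pos (sqrt a - sqrt c)). nra.
Qed.

Lemma derivable_pt_lim_shift (f : R -> R) (c t l : R) :
  derivable_pt_lim f (t + c) l -> derivable_pt_lim (fun s => f (s + c)) t l.
Proof.
  intros Hf.
  pose proof (derivable_pt_lim_plus _ _ t _ _ (derivable_pt_lim_id t)
                (derivable_pt_lim_const c t)) as Hlin.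
  rewrite <- (Rmult_1_r l); replace 1 with (1 + 0) by ring.
  exact (derivable_pt_lim_comp _ f t _ _ Hlin Hf).
Qed.

Lemma derivable_pt_lim_reflect (f : R -> R) (t l : R) :
  derivable_pt_lim f (- t) l -> derivable_pt_lim (fun s => f (- s)) t (- l).
Proof.
  intros Hf.
  pose proof (derivable_pt_lim_opp _ t _ (derivable_pt_lim_id t)) as Hopp.
  replace (- l) with (l * - (1)) by ring.
  exact (derivable_pt_lim_comp _ f t _ _ Hopp Hf).
Qed.

Lemma derivable_pt_lim_add_const (f : R -> R) (c t l : R) :
  derivable_pt_lim f t l -> derivable_pt_lim (fun s => f s + c) t l.
Proof.
  intros Hf. rewrite <- (Rplus_0_r l).
  exact (derivable_pt_lim_plus _ _ t _ _ Hf (derivable_pt_lim_const c t)).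
Qed.

Lemma derivable_pt_lim_weighted_gap (y1 y2 : R -> R) (D1 D2 k t : R) :
  derivable_pt_lim y1 t D1 -> derivable_pt_lim y2 t D2 ->
  derivable_pt_lim (fun s => (y1 s - y2 s) * (y1 s - y2 s) * exp (k * s)) t
    ((2 * (y1 t - y2 t) * (D1 - D2) + k * ((y1 t - y2 t) * (y1 t - y2 t))) * exp (k * t)).
Proof.
  intros H1 H2.
  pose proof (derivable_pt_lim_minus _ _ _ _ _ H1 H2) as Hgap.
  pose proof (derivable_pt_lim_mult _ _ _ _ _ Hgap Hgap) as Hsq.
  pose proof (derivable_pt_lim_comp _ _ _ _ _
                (derivable_pt_lim_scal _ k _ _ (derivable_pt_lim_id t))
                (derivable_pt_lim_exp (k * t))) as Hexp.
  pose proof (derivable_pt_lim_mult _ _ _ _ _ Hsq Hexp) as H.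
  unfold mult_fct, minus_fct, comp, mult_real_fct, id in H.
  replace ((2 * (y1 t - y2 t) * (D1 - D2) + k * ((y1 t - y2 t) * (y1 t - y2 t))) * exp (k * t))
    with (((D1 - D2) * (y1 t - y2 t) + (y1 t - y2 t) * (D1 - D2)) * exp (k * t)
         + (y1 t - y2 t) * (y1 t - y2 t) * (exp (k * t) * (k * 1))) by ring.
  exact H.
Qed.

Lemma ode_unique_forward (F : R -> R -> R) (L : R) (y1 y2 : R -> R) (t0 t : R) :
  (forall s a c, Rabs (F s a - F s c) <= L * Rabs (a - c)) ->
  (forall s, derivable_pt_lim y1 s (F s (y1 s))) ->
  (forall s, derivable_pt_lim y2 s (F s (y2 s))) ->
  y1 t0 = y2 t0 -> t0 <= t -> y1 t = y2 t.
Proof.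
  intros HF H1 H2 H0 [Hlt | <-]; [| exact H0].
  (* [(y1 - y2)^2 e^(-2Lt)] is nonincreasing and vanishes at [t0]. *)
  destruct (MVT_cor2 _ _ t0 t Hlt
              (fun c _ => derivable_pt_lim_weighted_gap y1 y2 _ _ (- (2 * L)) c (H1 c) (H2 c)))
    as [c [Hc _]].
  rewrite H0, Rminus_diag, !Rmult_0_l, Rminus_0_r in Hc.
  assert (Hslope : (y1 c - y2 c) * (F c (y1 c) - F c (y2 c))
                   <= L * ((y1 c - y2 c) * (y1 c - y2 c))).
  { pose proof (HF c (y1 c) (y2 c)).
    pose proof (Rabs_pos (y1 c - y2 c)).
    pose proof (Rle_abs ((y1 c - y2 c) * (F c (y1 c) - F c (y2 c)))) as Habs.
    rewrite Rabs_mult in Habs.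
    replace ((y1 c - y2 c) * (y1 c - y2 c)) with (Rabs (y1 c - y2 c) * Rabs (y1 c - y2 c))
      by (rewrite <- Rabs_mult; apply Rabs_pos_eq, Rle_0_sqr).
    nra. }
  pose proof (exp_pos (- (2 * L) * c)). pose proof (exp_pos (- (2 * L) * t)).
  pose proof (Rle_0_sqr (y1 t - y2 t)). unfold Rsqr in *.
  assert (Hdecay : (2 * (y1 c - y2 c) * (F c (y1 c) - F c (y2 c))
                    + - (2 * L) * ((y1 c - y2 c) * (y1 c - y2 c))) * exp (- (2 * L) * c) <= 0)
    by nra.
  assert (Hgap : Rsqr (y1 t - y2 t) <= 0) by (unfold Rsqr; nra).
  apply Rminus_diag_uniq, Rsqr_0_uniq, Rle_antisym; [exact Hgap | apply Rle_0_sqr].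
Qed.

Lemma ode_unique (F : R -> R -> R) (L : R) (y1 y2 : R -> R) (t0 : R) :
  (forall s a c, Rabs (F s a - F s c) <= L * Rabs (a - c)) ->
  (forall s, derivable_pt_lim y1 s (F s (y1 s))) ->
  (forall s, derivable_pt_lim y2 s (F s (y2 s))) ->
  y1 t0 = y2 t0 -> forall t, y1 t = y2 t.
Proof.
  intros HF H1 H2 H0 t.
  destruct (Rle_or_lt t0 t) as [Hle | Hlt].
  - exact (ode_unique_forward F L y1 y2 t0 t HF H1 H2 H0 Hle).
  - (* Backwards in time, [s |-> y (- s)] solves the reflected equation. *)
    rewrite <- (Ropp_involutive t).
    apply (ode_unique_forward (fun s a => - F (- s) a) L
             (fun s => y1 (- s)) (fun s => y2 (- s)) (- t0)).
    + intros s a c. cbv beta.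
      replace (- F (- s) a - - F (- s) c) with (- (F (- s) a - F (- s) c)) by ring.
      rewrite Rabs_Ropp. apply HF.
    + intros s. apply derivable_pt_lim_reflect, H1.
    + intros s. apply derivable_pt_lim_reflect, H2.
    + rewrite !Ropp_involutive. exact H0.
    + lra.
Qed.

Lemma autonomous_solution_shift (F : R -> R) (L p W : R) (y : R -> R) :
  (forall a c, Rabs (F a - F c) <= L * Rabs (a - c)) ->
  (forall a, F (a + p) = F a) ->
  (forall t, derivable_pt_lim y t (F (y t))) ->
  y W = y 0 + p -> forall t, y (t + W) = y t + p.
Proof.
  intros HF Hper Hy HW.
  apply (ode_unique (fun _ a => F a) L _ _ 0).
  - intros _. exact HF.
  - intros t. apply derivable_pt_lim_shift, Hy.
  - intros t. rewrite Hper. apply derivable_pt_lim_add_const, Hy.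
  - rewrite Rplus_0_l. exact HW.
Qed.

Lemma antiderivative_periodic_shift (f g : R -> R) (W : R) :
  (forall t, g (t + W) = g t) ->
  (forall t, derivable_pt_lim f t (g t)) ->
  forall t, f (t + W) = f t + (f W - f 0).
Proof.
  intros Hper Hf.
  apply (ode_unique (fun t _ => g t) 0 _ _ 0).
  - intros. rewrite Rminus_diag, Rabs_R0. pose proof (Rabs_pos (a - c)). lra.
  - intros t. rewrite <- Hper. apply derivable_pt_lim_shift, Hf.
  - intros t. apply derivable_pt_lim_add_const, Hf.
  - rewrite Rplus_0_l. ring.
Qed.

Lemma growth_of_deriv_ge (f f' : R -> R) (c a b : R) :
  (forall t, derivable_pt_lim f t (f' t)) -> (forall t, c <= f' t) ->
  a <= b -> f a + c * (b - a) <= f b.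
Proof.
  intros Hd Hc [Hab | <-]; [| lra].
  destruct (MVT_cor2 f f' a b Hab (fun z _ => Hd z)) as [z [Hz _]].
  pose proof (Hc z). nra.
Qed.

Lemma bijective_of_deriv_ge (f f' : R -> R) (c : R) : 0 < c ->
  (forall t, derivable_pt_lim f t (f' t)) -> (forall t, c <= f' t) ->
  (forall y, exists t, f t = y) /\ (forall a b, f a = f b -> a = b).
Proof.
  intros Hc Hd Hf'. split.
  - intros y.
    set (T := (Rabs y + Rabs (f 0) + 1) / c).
    assert (HcT : c * T = Rabs y + Rabs (f 0) + 1) by (unfold T; field; lra).
    assert (HT : 0 < T) by (pose proof (Rabs_pos y); pose proof (Rabs_pos (f 0)); nra).
    pose proof (growth_of_deriv_ge f f' c 0 T Hd Hf' ltac:(lra)).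
    pose proof (growth_of_deriv_ge f f' c (- T) 0 Hd Hf' ltac:(lra)).
    pose proof (Rle_abs y). pose proof (Rle_abs (- y)).
    pose proof (Rle_abs (f 0)). pose proof (Rle_abs (- f 0)). rewrite Rabs_Ropp in *.
    destruct (IVT (fun t => f t - y) (- T) T) as [t [_ Ht]]; [| lra | nra | nra |].
    + intros t. apply derivable_continuous_pt. exists (f' t - 0).
      apply derivable_pt_lim_minus; [apply Hd | apply derivable_pt_lim_const].
    + exists t. lra.
  - intros a b Hab.
    destruct (Rtotal_order a b) as [Hlt | [Heq | Hgt]]; [| exact Heq |].
    + pose proof (growth_of_deriv_ge f f' c a b Hd Hf' ltac:(lra)). nra.
    + pose proof (growth_of_deriv_ge f f' c b a Hd Hf' ltac:(lra)). nra.
Qed.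

Definition bprime_radicand (l1 l2 K y : R) : R :=
  l1 ^ 2 - K * (l1 ^ 2 * (cos y) ^ 2 + l2 ^ 2 * (sin y) ^ 2).

Lemma bprime_rhs_shift_PI l1 l2 K y : bprime_rhs l1 l2 K (y + PI) = bprime_rhs l1 l2 K y.
Proof. unfold bprime_rhs. rewrite neg_cos, neg_sin. f_equal. ring. Qed.

Section Radicand.

Variables l1 l2 K : R.
Hypothesis lambdas_ordered : 0 < l2 <= l1.
Hypothesis K_range : -1 < K < 1.

Lemma ellipse_form_bounds y : 0 <= l1 ^ 2 * (cos y) ^ 2 + l2 ^ 2 * (sin y) ^ 2 <= l1 ^ 2.
Proof.
  pose proof (sin2_cos2 y) as Hpyth. unfold Rsqr in Hpyth.
  pose proof (pow2_ge_0 (l1 * cos y)). pose proof (pow2_ge_0 (l2 * sin y)).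
  pose proof (pow2_ge_0 (sin y)).
  assert (l2 ^ 2 <= l1 ^ 2) by (simpl; nra).
  rewrite !Rpow_mult_distr in *. simpl in *. nra.
Qed.

Lemma bprime_radicand_floor_pos : 0 < l1 ^ 2 * (1 - Rabs K).
Proof.
  assert (Rabs K < 1) by (apply Rabs_def1; lra).
  apply Rmult_lt_0_compat; [apply pow_lt |]; lra.
Qed.

Lemma bprime_radicand_bounds y :
  l1 ^ 2 * (1 - Rabs K) <= bprime_radicand l1 l2 K y <= 2 * l1 ^ 2.
Proof.
  unfold bprime_radicand. pose proof (ellipse_form_bounds y).
  pose proof (Rle_abs K). pose proof (Rle_abs (- K)). rewrite Rabs_Ropp in *.
  assert (Rabs K < 1) by (apply Rabs_def1; lra).
  nra.
Qed.

Lemma bprime_radicand_lipschitz a c :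
  Rabs (bprime_radicand l1 l2 K a - bprime_radicand l1 l2 K c) <= 2 * l1 ^ 2 * Rabs (a - c).
Proof.
  replace (bprime_radicand l1 l2 K a - bprime_radicand l1 l2 K c)
    with (K * (l1 ^ 2 - l2 ^ 2) * (sin a + sin c) * (sin a - sin c)).
  2:{ unfold bprime_radicand.
      pose proof (sin2_cos2 a). pose proof (sin2_cos2 c). unfold Rsqr in *.
      replace (cos a ^ 2) with (1 - sin a ^ 2) by (simpl; lra).
      replace (cos c ^ 2) with (1 - sin c ^ 2) by (simpl; lra).
      ring. }
  rewrite !Rabs_mult.
  assert (Rabs K <= 1) by (apply Rabs_le; lra).
  assert (Rabs (sin a + sin c) <= 2)
    by (pose proof (SIN_bound a); pose proof (SIN_bound c); apply Rabs_le; lra).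
  rewrite (Rabs_pos_eq (l1 ^ 2 - l2 ^ 2)) by (simpl; nra).
  pose proof (sin_lipschitz a c). pose proof (Rabs_pos K).
  pose proof (Rabs_pos (sin a + sin c)). pose proof (Rabs_pos (sin a - sin c)).
  assert (0 <= l1 ^ 2 - l2 ^ 2 <= l1 ^ 2) by (simpl; nra).
  assert (Rabs K * (l1 ^ 2 - l2 ^ 2) <= l1 ^ 2) by nra.
  assert (Rabs (sin a + sin c) * Rabs (sin a - sin c) <= 2 * Rabs (a - c)) by nra.
  rewrite (Rmult_assoc (Rabs K * (l1 ^ 2 - l2 ^ 2))).
  replace (2 * l1 ^ 2 * Rabs (a - c)) with (l1 ^ 2 * (2 * Rabs (a - c))) by ring.
  apply Rmult_le_compat; nra.
Qed.

Lemma bprime_rhs_bounds y : 0 < bprime_rhs l1 l2 K y <= 2 * l1.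
Proof.
  pose proof (bprime_radicand_bounds y) as [Hlo Hhi].
  pose proof bprime_radicand_floor_pos.
  assert (Hpos : 0 < bprime_radicand l1 l2 K y) by lra.
  change (bprime_rhs l1 l2 K y) with (sqrt (bprime_radicand l1 l2 K y)).
  split; [exact (sqrt_lt_R0 _ Hpos) |].
  rewrite <- (sqrt_pow2 (2 * l1)) by lra.
  apply sqrt_le_1_alt. simpl in *. nra.
Qed.

Lemma bprime_rhs_lipschitz :
  exists L, forall a c, Rabs (bprime_rhs l1 l2 K a - bprime_rhs l1 l2 K c) <= L * Rabs (a - c).
Proof.
  set (m := l1 ^ 2 * (1 - Rabs K)).
  assert (Hm : 0 < m) by exact bprime_radicand_floor_pos.
  pose proof (sqrt_lt_R0 _ Hm).
  exists (l1 ^ 2 / sqrt m). intros a c.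
  pose proof (sqrt_lipschitz m _ _ Hm (proj1 (bprime_radicand_bounds a))
                                      (proj1 (bprime_radicand_bounds c))).
  pose proof (bprime_radicand_lipschitz a c).
  change (bprime_rhs l1 l2 K ?y) with (sqrt (bprime_radicand l1 l2 K y)).
  apply Rmult_le_reg_l with (2 * sqrt m); [lra |].
  replace (2 * sqrt m * (l1 ^ 2 / sqrt m * Rabs (a - c))) with (2 * l1 ^ 2 * Rabs (a - c))
    by (field; lra).
  lra.
Qed.

Lemma K_mul_x3prime_lower b v : l2 * K ^ 2 / 3 <= K * x3prime l1 l2 K b v.
Proof.
  pose proof (bprime_rhs_bounds (b v)).
  unfold x3prime. set (D := bprime_rhs l1 l2 K (b v)) in *.
  replace (K * (l1 * l2 * K / (l1 + D))) with (l1 * l2 * K ^ 2 / (l1 + D)) by (field; lra).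
  assert (Hgap : l1 * l2 * K ^ 2 / (l1 + D) - l2 * K ^ 2 / 3
                 = l2 * K ^ 2 * (2 * l1 - D) / (3 * (l1 + D))) by (field; lra).
  assert (0 <= l2 * K ^ 2 * (2 * l1 - D) / (3 * (l1 + D))).
  { apply Rle_mult_inv_pos; [| lra].
    pose proof (pow2_ge_0 K). apply Rmult_le_pos; [apply Rmult_le_pos |]; lra. }
  lra.
Qed.

Lemma x3prime_neq0 b v : K <> 0 -> x3prime l1 l2 K b v <> 0.
Proof.
  intros HK0 Hzero. pose proof (K_mul_x3prime_lower b v) as Hlow.
  rewrite Hzero, Rmult_0_r in Hlow.
  pose proof (Rsqr_pos_lt K HK0). unfold Rsqr in *. simpl in *. nra.
Qed.

End Radicand.

Lemma x3_bijective l1 l2 K (b x3 : R -> R) :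
  0 < l2 <= l1 -> -1 < K < 1 -> K <> 0 ->
  (forall v, derivable_pt_lim x3 v (x3prime l1 l2 K b v)) ->
  (forall t, exists v, x3 v = t) /\ (forall v w, x3 v = x3 w -> v = w).
Proof.
  intros Hl HK HK0 Hx.
  (* Multiplying by [K] makes the derivative positive whatever the sign of [K]. *)
  assert (Hc : 0 < l2 * K ^ 2 / 3).
  { pose proof (Rsqr_pos_lt K HK0). unfold Rsqr in *. simpl. nra. }
  destruct (bijective_of_deriv_ge (fun v => K * x3 v) (fun v => K * x3prime l1 l2 K b v) _ Hc)
    as [Hsurj Hinj].
  - intros v. apply derivable_pt_lim_scal, Hx.
  - intros v. exact (K_mul_x3prime_lower l1 l2 K Hl HK b v).
  - split.
    + intros t. destruct (Hsurj (K * t)) as [v Hv]. exists v.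
      apply (Rmult_eq_reg_l K); assumption.
    + intros v w E. apply Hinj. rewrite E. reflexivity.
Qed.

Definition ruling_direction (l1 l2 K : R) (b x3 : R -> R) (v : R) : R * R :=
  let k := / (l1 ^ 2 * l2) * x3prime l1 l2 K b v in
  let p := sin (b v) / l1 in
  let q := cos (b v) / l2 in
  (k * (cos (x3 v) * p + sin (x3 v) * q), k * (sin (x3 v) * p - cos (x3 v) * q)).

Lemma Xmap_ruling l1 l2 K b x3 u v :
  Xmap l1 l2 K b x3 u v =
  (sinh (- l1 * u) * fst (ruling_direction l1 l2 K b x3 v),
   sinh (- l1 * u) * snd (ruling_direction l1 l2 K b x3 v), x3 v).
Proof. unfold Xmap, ruling_direction, Rdiv; simpl. f_equal; f_equal; ring. Qed.

Lemma rotation_norm (theta p q : R) :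
  (cos theta * p + sin theta * q) ^ 2 + (sin theta * p - cos theta * q) ^ 2 = p ^ 2 + q ^ 2.
Proof.
  transitivity ((p ^ 2 + q ^ 2) * (Rsqr (sin theta) + Rsqr (cos theta))).
  - unfold Rsqr. ring.
  - rewrite sin2_cos2. ring.
Qed.

Lemma ruling_direction_nonzero l1 l2 K b x3 v :
  0 < l1 -> 0 < l2 -> x3prime l1 l2 K b v <> 0 ->
  fst (ruling_direction l1 l2 K b x3 v) <> 0 \/ snd (ruling_direction l1 l2 K b x3 v) <> 0.
Proof.
  intros Hl1 Hl2 Hx. unfold ruling_direction. cbv zeta.
  set (p := sin (b v) / l1). set (q := cos (b v) / l2).
  set (k := / (l1 ^ 2 * l2) * x3prime l1 l2 K b v).
  assert (Hk : k <> 0).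
  { unfold k. apply Rmult_integral_contrapositive_currified; [| exact Hx].
    apply Rinv_neq_0_compat. apply Rgt_not_eq, Rmult_lt_0_compat; [apply pow_lt |]; lra. }
  simpl.
  destruct (Req_dec (k * (cos (x3 v) * p + sin (x3 v) * q)) 0) as [H1 | H1]; [| now left].
  destruct (Req_dec (k * (sin (x3 v) * p - cos (x3 v) * q)) 0) as [H2 | H2]; [| now right].
  exfalso.
  apply Rmult_integral in H1 as [? | H1]; [contradiction |].
  apply Rmult_integral in H2 as [? | H2]; [contradiction |].
  pose proof (rotation_norm (x3 v) p q) as Hnorm. rewrite H1, H2 in Hnorm.
  assert (Hp : sin (b v) = l1 * p) by (unfold p; field; lra).
  assert (Hq : cos (b v) = l2 * q) by (unfold q; field; lra).
  pose proof (sin2_cos2 (b v)). unfold Rsqr in *. rewrite Hp, Hq in *.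
  simpl in Hnorm. nra.
Qed.

Lemma Ximage_slice l1 l2 K b x3 v0 x1 x2 :
  0 < l1 -> (forall v w, x3 v = x3 w -> v = w) ->
  Ximage l1 l2 K b x3 (x1, x2, x3 v0) <->
  exists s, x1 = s * fst (ruling_direction l1 l2 K b x3 v0)
         /\ x2 = s * snd (ruling_direction l1 l2 K b x3 v0).
Proof.
  intros Hl1 Hinj. split.
  - intros [u [v H]]. rewrite Xmap_ruling in H. injection H as H1 H2 H3.
    apply Hinj in H3 as ->. exists (sinh (- l1 * u)). split; symmetry; assumption.
  - intros [s [-> ->]]. exists (- arcsinh s / l1), v0. rewrite Xmap_ruling.
    replace (- l1 * (- arcsinh s / l1)) with (arcsinh s) by (field; lra).
    rewrite sinh_arcsinh. reflexivity.
Qed.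

Lemma e2mul_vertical_Xmap l1 l2 K b x3 theta u v w :
  b w = b v + 2 * PI -> x3 w = x3 v + theta ->
  e2mul (0, 0, theta) (Xmap l1 l2 K b x3 u v) = Xmap l1 l2 K b x3 u w.
Proof.
  intros Hb Hx.
  assert (Hb' : b w = b v + PI + PI) by (rewrite Hb; ring).
  assert (Hsin : sin (b w) = sin (b v)) by (rewrite Hb', !neg_sin; ring).
  assert (Hcos : cos (b w) = cos (b v)) by (rewrite Hb', !neg_cos; ring).
  assert (Hx' : x3prime l1 l2 K b w = x3prime l1 l2 K b v)
    by (unfold x3prime, bprime_rhs; rewrite Hsin, Hcos; reflexivity).
  unfold e2mul, Xmap. rewrite Hx, Hsin, Hcos, Hx', sin_plus, cos_plus.
  f_equal; [f_equal |]; ring.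
Qed.

Theorem theorem4p2 (l1 l2 K : R) (b x3 : R -> R) (W : R) :
  admissible_lambdas l1 l2 ->
  -1 < K < 1 -> K <> 0 ->
  (forall v, derivable_pt_lim b v (bprime_rhs l1 l2 K (b v))) ->
  b 0 = 0 ->
  W > 0 -> b W = PI ->
  (forall v, derivable_pt_lim x3 v (x3prime l1 l2 K b v)) ->
  x3 0 = 0 ->
  (* (1) the x3-axis lies in X(C) *)
  (forall t : R, Ximage l1 l2 K b x3 (0, 0, t)) /\
  (* (2) each horizontal slice {x3 = C} of X(C) is a straight line *)
  (forall C : R, exists p1 p2 d1 d2 : R, (d1 <> 0 \/ d2 <> 0) /\
     forall x1 x2 : R,
       Ximage l1 l2 K b x3 (x1, x2, C) <->
       exists s : R, x1 = p1 + s * d1 /\ x2 = p2 + s * d2) /\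
  (* (3) invariance under left multiplication by (0,0,2 x3(W)) *)
  (forall u v : R,
     e2mul (0, 0, 2 * x3 W) (Xmap l1 l2 K b x3 u v) = Xmap l1 l2 K b x3 u (v + 2 * W)).
Proof.
  intros Hadm HK HK0 Hb Hb0 _ HbW Hx Hx0.
  assert (Hl : 0 < l2 <= l1) by (destruct Hadm; lra).
  destruct (x3_bijective l1 l2 K b x3 Hl HK HK0 Hx) as [x3_surj x3_inj].
  destruct (bprime_rhs_lipschitz l1 l2 K Hl HK) as [L HL].
  assert (b_shift : forall v, b (v + W) = b v + PI).
  { apply (autonomous_solution_shift _ L _ _ _ HL (bprime_rhs_shift_PI l1 l2 K) Hb).
    rewrite Hb0, HbW. ring. }
  assert (x3_shift : forall v, x3 (v + W) = x3 v + x3 W).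
  { intros v. rewrite (antiderivative_periodic_shift x3 (x3prime l1 l2 K b) W), Hx0; [ring | | exact Hx].
    intros t. unfold x3prime. rewrite b_shift, bprime_rhs_shift_PI. reflexivity. }
  split; [| split].
  - intros t. destruct (x3_surj t) as [v <-]. exists 0, v.
    rewrite Xmap_ruling, Rmult_0_r, sinh_0, !Rmult_0_l. reflexivity.
  - intros C. destruct (x3_surj C) as [v0 <-].
    exists 0, 0, (fst (ruling_direction l1 l2 K b x3 v0)), (snd (ruling_direction l1 l2 K b x3 v0)).
    split.
    + apply ruling_direction_nonzero; [lra | lra | exact (x3prime_neq0 l1 l2 K Hl HK b v0 HK0)].
    + intros x1 x2. rewrite Ximage_slice by (lra || exact x3_inj).
      split; intros [s Hs]; exists s; lra.
  - intros u v. apply e2mul_vertical_Xmap.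
    + replace (v + 2 * W) with (v + W + W) by ring. rewrite !b_shift. ring.
    + replace (v + 2 * W) with (v + W + W) by ring. rewrite !x3_shift. ring.
Qed.
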